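(* Let ${\mathcal A}^0$ be a central generic arrangement of $n$ hyperplanes in $\mathbb{C}^k$ and let $\mathbb{T}=\{L_1,\dots,L_r\}$ be an $r$-set with $\bigcup_{i=1}^r L_i=[n]$. Let ${\mathcal A}^{t_1},\dots,{\mathcal A}^{t_d}$ be $K_{\mathbb{T}}$-translated arrangements of ${\mathcal A}^0$ and fix $i_0\in[r]$. Then $t_1,\dots,t_d$ are linearly independent in the quotient space $\mathbb{C}^n/C$, where $C=\{t\in\mathbb{C}^n\mid {\mathcal A}^t\text{ is a central arrangement}\}$, if and only if the associated $K_{\mathbb{T}}$-vector sets $\{v^{t_h}_{i_0,j}\}_{j\neq i_0}$, $h=1,\dots,d$, are weakly linearly independent.
   Context: A central arrangement ${\mathcal A}^0=\{H_1^0,\dots,H_n^0\}$ of linear hyperplanes in $\mathbb{C}^k$ ($k<n$) is called central generic if any $m\le k$ of its hyperplanes intersect in codimension $m$. Let $\alpha_i$ be a normal vector of $H_i^0$. For $t=(x_1,\dots,x_n)\in\mathbb{C}^n$, the translate ${\mathcal A}^t=\{H_1^{x_1},\dots,H_n^{x_n}\}$ has $H_i^{x_i}=H_i^0+\alpha_i x_i$; a translate is central if all its hyperplanes share a common point. An $r$-set is a set $\mathbb{T}=\{L_1,\dots,L_r\}$ of subsets $L_i\subset[n]=\{1,\dots,n\}$, $|L_i|=k+1$, such that $\bigcup_{i=1}^r L_i=\bigcup_{i\in I}L_i$ for every $I\subset[r]$ with $|I|=r-1$, and $L_i\cap L_j\neq\emptyset$ for all $i\ne j$. A translate ${\mathcal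 A}^t$ is $K_{\mathbb{T}}$-translated if for every $L_i\in\mathbb{T}$ the set $P_i^t=\bigcap_{p\in L_i}H_p^{x_p}$ is nonempty (hence a point) and is the intersection of exactly the $k+1$ hyperplanes indexed by $L_i$. For such ${\mathcal A}^t$ and fixed $i_0\in[r]$, its $K_{\mathbb{T}}$-vector set is the family $\{v^t_{i_0,j}\}_{j\in[r],j\neq i_0}$ of vectors in $\mathbb{C}^k$ with $P^t_{i_0}+v^t_{i_0,j}=P^t_j$. $K_{\mathbb{T}}$-vector sets $\{v^{t_h}_{i_0,j}\}_{j\ne i_0}$, $h=1,\dots,d$, are weakly linearly independent if $\sum_{h=1}^d a_h v^{t_h}_{i_0,j}=0$ for all $j\ne i_0$ (with $a_h\in\mathbb{C}$) implies $a_1=\dots=a_d=0$. *)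

From HB Require Import structures.
From mathcomp Require Import all_boot all_order all_algebra.
From mathcomp Require Import complex.
From mathcomp Require Import reals.
Set Implicit Arguments. Unset Strict Implicit. Unset Printing Implicit Defensive.
Import Order.TTheory GRing.Theory Num.Theory.
Local Open Scope ring_scope.

Section Arr.
Variables (R : realType) (k n : nat).
Local Notation C := (R[i]).

Variable alpha : 'I_n -> 'rV[C]_k.

(* H_i^0 : the linear hyperplane with normal vector alpha_i (w.r.t. the standard
   Hermitian product), as a row space: all y with  sum_j y_j * conj(alpha_i j) = 0 *)
Definition H0 (i : 'I_n) : 'M[C]_k := kermx (map_mx (@conjc R) (alpha i))^T.

Definition central_generic : Prop :=
  forall S : {set 'I_n}, (#|S| <= k)%N ->
    (k - \rank (\bigcap_(i in S) H0 i)%MS)%N = #|S|.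

Definition inH (i : 'I_n) (x : C) (y : 'rV[C]_k) : Prop :=
  exists2 p : 'rV[C]_k, (p <= H0 i)%MS & y = p + x *: alpha i.

Definition central_translate (t : 'rV[C]_n) : Prop :=
  exists y : 'rV[C]_k, forall i : 'I_n, inH i (t 0 i) y.

(* r-set T = {L_1, ..., L_r} (L injective, since T is a set of r subsets) *)
Definition r_set (r : nat) (L : 'I_r -> {set 'I_n}) : Prop :=
  [/\ injective L,
      forall i, #|L i| = k.+1,
      forall I : {set 'I_r}, #|I| = r.-1 ->
        \bigcup_(i in I) L i = \bigcup_(i < r) L i
    & forall i j, i != j -> L i :&: L j != set0].

Definition KT_translated (r : nat) (L : 'I_r -> {set 'I_n}) (t : 'rV[C]_n) : Prop :=
  forall i : 'I_r, exists P : 'rV[C]_k,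
    forall p : 'I_n, inH p (t 0 p) P <-> p \in L i.

Definition is_KT_point (Li : {set 'I_n}) (t : 'rV[C]_n) (P : 'rV[C]_k) : Prop :=
  forall p : 'I_n, p \in Li -> inH p (t 0 p) P.

End Arr.

From HB Require Import structures.
From mathcomp Require Import all_boot all_order all_algebra.
From mathcomp Require Import complex.
From mathcomp Require Import reals.
Import Order.TTheory GRing.Theory Num.Theory.
Local Open Scope ring_scope.

(* Membership in a translated hyperplane is an affine condition, so linear
   combinations of K_T-points are K_T-points of the combined translate; and a
   point of k generic translated hyperplanes is unique.  Hence both conditions
   say the same thing about the combination Q_j := sum_h a_h P_j^{t_h}: if all
   the Q_j coincide, their common value lies on every hyperplane of the combined
   translate (the L_j cover [n]); conversely, a common point of that translate
   is a K_T-point of each L_j, so by uniqueness it equals every Q_j. *)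

Section KTPoints.
Context {R : realType} {k n : nat} {alpha : 'I_n -> 'rV[R[i]]_k}.

Lemma inHP p x y : inH alpha p x y <-> (y - x *: alpha p <= H0 alpha p)%MS.
Proof.
split; first by case=> q hq ->; rewrite addrK.
by move=> h; exists (y - x *: alpha p) => //; rewrite subrK.
Qed.

Lemma inH_subB p x y z :
  inH alpha p x y -> inH alpha p x z -> (y - z <= H0 alpha p)%MS.
Proof.
move=> /inHP hy /inHP hz.
have -> : y - z = (y - x *: alpha p) - (z - x *: alpha p).
  by rewrite opprB addrA subrK.
by apply: addmx_sub => //; rewrite -scaleN1r; apply: scalemx_sub.
Qed.

Lemma is_KT_point_sum d (S : {set 'I_n}) (a : 'I_d -> R[i])
    (t : 'I_d -> 'rV[R[i]]_n) (P : 'I_d -> 'rV[R[i]]_k) :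
  (forall h, is_KT_point alpha S (t h) (P h)) ->
  is_KT_point alpha S (\sum_(h < d) a h *: t h) (\sum_(h < d) a h *: P h).
Proof.
move=> KP p pS; apply/inHP.
have -> : \sum_(h < d) a h *: P h - (\sum_(h < d) a h *: t h) 0 p *: alpha p
          = \sum_(h < d) a h *: (P h - t h 0 p *: alpha p).
  rewrite summxE scaler_suml -sumrB; apply: eq_bigr => h _.
  by rewrite scalerBr scalerA mxE.
by apply: summx_sub => h _; apply: scalemx_sub; apply/inHP; apply: KP.
Qed.

Lemma bigcap_H0_eq0 {S : {set 'I_n}} :
  central_generic alpha -> #|S| = k -> (\bigcap_(i in S) H0 alpha i)%MS = 0.
Proof.
move=> cg cS; apply/eqP; rewrite -mxrank_eq0.
have := cg S (eq_leq cS); rewrite cS => /eqP.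
rewrite -(eqn_add2r (\rank (\bigcap_(i in S) H0 alpha i))) subnK ?rank_leq_col //.
by rewrite -{1}[k]addn0 eqn_add2l eq_sym.
Qed.

Lemma eq_KT_point {S : {set 'I_n}} {t} {P Q : 'rV[R[i]]_k} :
  central_generic alpha -> #|S| = k ->
  is_KT_point alpha S t P -> is_KT_point alpha S t Q -> P = Q.
Proof.
move=> cg cS KP KQ; apply/eqP; rewrite -subr_eq0 -submx0 -(bigcap_H0_eq0 cg cS).
by apply/sub_bigcapmxP => p pS; apply: inH_subB; [apply: KP | apply: KQ].
Qed.

Lemma eq_KT_point_succ {S : {set 'I_n}} {t} {P Q : 'rV[R[i]]_k} :
  central_generic alpha -> #|S| = k.+1 ->
  is_KT_point alpha S t P -> is_KT_point alpha S t Q -> P = Q.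
Proof.
move=> cg cS KP KQ.
have [x xS] : exists x, x \in S by apply/set0Pn; rewrite -card_gt0 cS.
have cSx : #|S :\ x| = k by move: (cardsD1 x S); rewrite xS cS add1n => -[].
by apply: (eq_KT_point cg cSx) => p /setD1P[_ pS]; [apply: KP | apply: KQ].
Qed.

End KTPoints.

Theorem lemma3p1 (R : realType) (k n r d : nat)
  (alpha : 'I_n -> 'rV[R[i]]_k)
  (L : 'I_r -> {set 'I_n})
  (t : 'I_d -> 'rV[R[i]]_n)
  (P : 'I_d -> 'I_r -> 'rV[R[i]]_k)
  (i0 : 'I_r) :
  (k < n)%N ->
  (forall i, alpha i != 0) ->
  central_generic alpha ->
  r_set k L ->
  \bigcup_(i < r) L i = [set: 'I_n] ->
  (forall h, KT_translated alpha L (t h)) ->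
  (forall h j, is_KT_point alpha (L j) (t h) (P h j)) ->
  (forall a : 'I_d -> R[i],
      central_translate alpha (\sum_(h < d) a h *: t h) -> forall h, a h = 0)
  <->
  (forall a : 'I_d -> R[i],
      (forall j : 'I_r, j != i0 ->
         \sum_(h < d) a h *: (P h j - P h i0) = 0) -> forall h, a h = 0).
Proof.
move=> _ _ cg [_ cardL _ _] cover _ KP.
split=> indep a Ha; apply: indep.
- set Q := fun j => \sum_(h < d) a h *: P h j.
  have QE j : Q j = Q i0.
    have [->//|jn] := eqVneq j i0.
    apply/eqP; rewrite -subr_eq0 /Q -sumrB -[X in _ == X](Ha j jn).
    by apply/eqP; apply: eq_bigr => h _; rewrite scalerBr.
  exists (Q i0) => p.
  have /bigcupP[j _ pj] : p \in \bigcup_(j < r) L j by rewrite cover inE.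
  by rewrite -(QE j); apply: is_KT_point_sum pj => h; apply: KP.
- case: Ha => y hy j _.
  have Qy j' : \sum_(h < d) a h *: P h j' = y.
    apply: (eq_KT_point_succ cg (cardL j')) => [|p _]; last exact: hy.
    by apply: is_KT_point_sum => h; apply: KP.
  under eq_bigr do rewrite scalerBr.
  by rewrite sumrB (Qy j) (Qy i0) subrr.
Qed.
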